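(* Let $T$ be a decomposition tree of a distance-hereditary graph $G$, and let $v$ be an internal node of $T$ labeled $\oplus$ with left child $v_l$ and right child $v_r$, such that property (P) holds at $v_l$ and at $v_r$. Assume that $\hat\alpha(v_r)\le\hat\beta(v_l)$, and that neither ($\hat\alpha(v_l)=\hat\beta(v_r)=0$) nor ($\hat\alpha(v_r)=\hat\beta(v_l)=0$) holds. Then $$\hat\alpha(v)=\begin{cases}\hat\alpha(v_l)-\hat\beta(v_r) & \text{if } \hat\alpha(v_l)>\hat\beta(v_r),\\ |\hat\alpha(v_l)-\hat\alpha(v_r)|\bmod 2 & \text{otherwise.}\end{cases}$$
   Context: All graphs are finite, simple, undirected. For a graph $H$ and $S\subseteq V(H)$, $N_H[S]$ is $S$ together with all vertices adjacent to a vertex of $S$, and $H[S]$ is the induced subgraph. Graphs carry a ''twin set'': a single-vertex graph on $x$ has twin set $\{x\}$. For vertex-disjoint graphs $G_l,G_r$ with twin sets $TS(G_l),TS(G_r)$: the true twin operation $G_l\otimes G_r$ has vertex set $V(G_l)\cup V(G_r)$, edge set $E(G_l)\cup E(G_r)\cup\{uw: u\in TS(G_l), w\in TS(G_r)\}$ and twin set $TS(G_l)\cup TS(G_r)$; the false twin operation $G_l\odot G_r$ has vertex set $V(G_l)\cup V(G_r)$, edge set $E(G_l)\cup E(G_r)$, twin set $TS(G_l)\cup TS(G_r)$; the attachment operation $G_l\oplus G_r$ has the same vertex and edge sets as $G_l\otimes G_r$ and twin set $TS(G_l)$. A decomposition tree $T$ of $G$ is a rooted binary tree whose leaves are in bijection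 with $V(G)$, each internal node having a left and a right child and a label in $\{\otimes,\odot,\oplus\}$; for each node $v$ define $\hat G(v)$ and $\hat{TS}(v)$ recursively: for a leaf $x$, the single-vertex graph on $x$ with twin set $\{x\}$; for an internal node $v$ with label $\circ$ and children $v_l,v_r$, $\hat G(v)=\hat G(v_l)\circ\hat G(v_r)$ with the corresponding twin set; one requires $\hat G(\text{root})=G$. Then $\hat G(v)$ is the subgraph of $G$ induced by the set $\hat V(v)$ of leaves below $v$. For a node $u$ and $0\le k\le|\hat{TS}(u)|$, call $S\subseteq\hat V(u)$ $k$-feasible if $\hat V(u)\setminus\hat{TS}(u)\subseteq N_{\hat G(u)}[S]$ and there is $X\subseteq S\cap\hat{TS}(u)$ with $|X|=k$ such that $\hat G(u)[S\setminus X]$ has a perfect matching. $\hat\gamma_k(u)$ is the minimum size of a $k$-feasible set. $\hat{min}(u)=\min\{\hat\gamma_k(u):0\le k\le|\hat{TS}(u)|\}$, and $\hat\alpha(u)$, $\hat\beta(u)$ are the smallest and the largest $k$ with $\hat\gamma_k(u)=\hat{min}(u)$. Property (P) holds at $u$ if for every $0\le k\le|\hat{TS}(u)|$: $\hat\gamma_k(u)=\hat{min}(u)+\hat\alpha(u)-k$ when $k\le\hat\alpha(u)$; $\hat\gamma_k(u)=\hat{min}(u)+k-\hat\beta(u)$ when $k\ge\hat\beta(u)$; $\hat\gamma_k(u)=\hat{min}(u)$ when $\hat\alpha(u)<k<\hat\beta(u)$ and $k-\hat\alpha(u)$ is even; and $\hat\gamma_k(u)=\hat{min}(u)+1$ otherwise.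 *)

From mathcomp Require Import all_boot.
Set Implicit Arguments. Unset Strict Implicit. Unset Printing Implicit Defensive.

Inductive op := OTrue (* true twin, ⊗ *) | OFalse (* false twin, ⊙ *) | OAttach (* attachment, ⊕ *).

Inductive dtree (V : Type) := Leaf of V | Node of op & dtree V & dtree V.
Arguments Leaf {V}. Arguments Node {V}.

Section DT.
Variable V : finType.

Fixpoint hV (t : dtree V) : {set V} :=
  match t with Leaf x => [set x] | Node _ l r => hV l :|: hV r end.

Fixpoint hTS (t : dtree V) : {set V} :=
  match t with
  | Leaf x => [set x]
  | Node OAttach l r => hTS l
  | Node _ l r => hTS l :|: hTS r
  end.

Fixpoint hE (t : dtree V) (u w : V) : bool :=
  match t with
  | Leaf _ => false
  | Node OFalse l r => hE l u w || hE r u w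
  | Node _ l r => [|| hE l u w, hE r u w,
                     (u \in hTS l) && (w \in hTS r) | (u \in hTS r) && (w \in hTS l)]
  end.

(* the operations are applied to vertex-disjoint graphs (leaves in bijection) *)
Fixpoint wf_tree (t : dtree V) : bool :=
  match t with
  | Leaf _ => true
  | Node _ l r => [&& wf_tree l, wf_tree r & [disjoint hV l & hV r]]
  end.

Fixpoint is_node (v T : dtree V) : Prop :=
  v = T \/ match T with Leaf _ => False | Node _ l r => is_node v l \/ is_node v r end.

Definition simple_graph (e : rel V) := symmetric e /\ irreflexive e.

Definition decomp_tree (e : rel V) (T : dtree V) :=
  [/\ wf_tree T, hV T = [set: V] & forall u w, e u w = hE T u w].

Fixpoint ball (e : rel V) (S : {set V}) (k : nat) (u : V) : {set V} :=
  match k with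
  | 0 => [set u]
  | k'.+1 => ball e S k' u :|: [set y in S | [exists x in ball e S k' u, e x y]]
  end.

Definition connected_in (e : rel V) (S : {set V}) :=
  forall u w, u \in S -> w \in S -> exists k, w \in ball e S k u.

(* distance-hereditary: in every connected induced subgraph, distances equal those in G *)
Definition distance_hereditary (e : rel V) :=
  forall S : {set V}, connected_in e S ->
  forall u w k, u \in S -> w \in S -> (w \in ball e S k u) = (w \in ball e setT k u).

Definition closed_nbhd (t : dtree V) (S : {set V}) : {set V} :=
  [set x in hV t | (x \in S) || [exists y in S, hE t x y]].

Definition has_perfect_matching (e : rel V) (A : {set V}) : bool :=
  [exists M : {set {set V}}, partition M A &&
    [forall m in M, exists a, exists b, [&& a != b, e a b & m == [set a; b]]]].

Definition kfeasible (t : dtree V) (k : nat) (S : {set V}) : bool :=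
  [&& S \subset hV t, (hV t :\: hTS t) \subset closed_nbhd t S &
      [exists X : {set V}, [&& X \subset S :&: hTS t, #|X| == k &
                              has_perfect_matching (hE t) (S :\: X)]]].

(* \hat\gamma_k(t): minimum size of a k-feasible set; #|V|.+1 encodes "infinity" *)
Definition hgamma (t : dtree V) (k : nat) : nat :=
  \big[minn/#|V|.+1]_(S : {set V} | kfeasible t k S) #|S|.

Definition hmin (t : dtree V) : nat :=
  \big[minn/#|V|.+1]_(k < #|hTS t|.+1) hgamma t k.

Definition halpha (t : dtree V) : nat :=
  \big[minn/#|hTS t|]_(k < #|hTS t|.+1 | hgamma t k == hmin t) (k : nat).

Definition hbeta (t : dtree V) : nat :=
  \max_(k < #|hTS t|.+1 | hgamma t k == hmin t) (k : nat).

Definition propP (t : dtree V) : Prop :=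
  forall k, k <= #|hTS t| ->
  [/\ k <= halpha t -> hgamma t k = hmin t + halpha t - k,
      hbeta t <= k -> hgamma t k = hmin t + k - hbeta t,
      halpha t < k < hbeta t -> ~~ odd (k - halpha t) -> hgamma t k = hmin t &
      halpha t < k < hbeta t -> odd (k - halpha t) -> hgamma t k = hmin t + 1].

End DT.

(** The twin set of an attachment node [v = vl (+) vr] is that of [vl], and every twin
    vertex of [vl] is adjacent to every twin vertex of [vr]. Cutting a k-feasible set of [v]
    along the two sides gives a (k+j)-feasible set of [vl] and a j-feasible set of [vr], where
    j counts the matching edges that cross between the twin sets; conversely two such sets are
    glued back (when k+j > 0) by matching j excluded twins of [vl] with the j excluded twins of
    [vr]. Hence [gamma_k(v) = min_j gamma_(k+j)(vl) + gamma_j(vr)], [min(v) = min(vl) + min(vr)],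
    and the optimal k of [v] are the differences x - j, j <= x, of optimal x of [vl] and optimal
    j of [vr]. Since [gamma_k = k (mod 2)], property (P) says that the optimal k of a node are
    exactly the integers of [[alpha, beta]] with the parity of [alpha], and [alpha(v)] is the
    least such difference, computed by elementary arithmetic. *)

From mathcomp Require Import all_boot all_order.
Import Order.TTheory.
Set Implicit Arguments. Unset Strict Implicit. Unset Printing Implicit Defensive.

Section PerfectMatching.
Variable V : finType.
Implicit Types (E : rel V) (A B : {set V}) (p : V -> V).

Definition pairing E A p :=
  forall x, x \in A -> [/\ p x \in A, p x != x, E x (p x) & p (p x) = x].

Lemma pairing_perfect_matching E A p : pairing E A p -> has_perfect_matching E A.
Proof.
move=> pA.
have pair_eq x z : x \in A -> z \in [set x; p x] -> [set x; p x] = [set z; p z].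
  move=> xA; rewrite !inE => /orP[]/eqP-> //.
  by have [_ _ _ ->] := pA x xA; rewrite setUC.
apply/existsP; exists [set [set x; p x] | x in A]; apply/andP; split.
  apply/and3P; split.
  - apply/eqP/setP => y; apply/bigcupP/idP => [[_ /imsetP[x xA ->]]|yA].
      by rewrite !inE => /orP[]/eqP-> //; case: (pA x xA).
    by exists [set y; p y]; [apply: imset_f | rewrite !inE eqxx].
  - apply/trivIsetP => _ _ /imsetP[x xA ->] /imsetP[y yA ->] neq.
    apply/pred0P => z /=; apply/negbTE/andP => -[zx zy].
    by move: neq; rewrite (pair_eq x z) // (pair_eq y z) // eqxx.
  - by apply/imsetP => -[x _ /setP/(_ x)]; rewrite !inE eqxx.
apply/forallP => m; apply/implyP => /imsetP[x xA ->].
have [_ pxx Ex _] := pA x xA.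
by apply/existsP; exists x; apply/existsP; exists (p x); rewrite eq_sym pxx Ex eqxx.
Qed.

Lemma pairing_restrict E E' A B p : pairing E A p -> B \subset A ->
  {in B, forall x, p x \in B} -> {in B &, forall x y, E x y -> E' x y} ->
  has_perfect_matching E' B.
Proof.
move=> pA /subsetP BA pB EE'; apply: (pairing_perfect_matching (p := p)) => x xB.
by have [_ pxx Ex ppx] := pA x (BA x xB); rewrite pB // EE' ?pB.
Qed.

Lemma perfect_matching0 E : has_perfect_matching E set0.
Proof. by apply: (pairing_perfect_matching (p := id)) => x; rewrite inE. Qed.

Lemma perfect_matching_even E A : has_perfect_matching E A -> ~~ odd #|A|.
Proof.
case/existsP => M /andP[pM /forallP M2].
rewrite (card_partition pM) (eq_bigr (fun _ => 2)) ?sum_nat_const ?oddM ?andbF //.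
move=> m mM; have /implyP/(_ mM)/existsP[a /existsP[b /and3P[ab _ /eqP ->]]] := M2 m.
by rewrite cards2 ab.
Qed.

Lemma perfect_matching_mono E E' A :
  {in A &, forall x y, E x y -> E' x y} ->
  has_perfect_matching E A -> has_perfect_matching E' A.
Proof.
move=> EE' /existsP[M /andP[pM /forallP M2]]; apply/existsP; exists M; rewrite pM /=.
apply/forallP => m; apply/implyP => mM.
have /implyP/(_ mM)/existsP[a /existsP[b /and3P[ab Eab /eqP mab]]] := M2 m.
have inA z : z \in m -> z \in A.
  by case/and3P: pM => /eqP<- _ _ zm; apply/bigcupP; exists m.
apply/existsP; exists a; apply/existsP; exists b; rewrite ab mab eqxx EE' //;
  by apply: inA; rewrite mab !inE eqxx ?orbT.
Qed.

Section Symmetric.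
Variable E : rel V.
Hypothesis Esym : symmetric E.

Lemma perfect_matching_pairing A : has_perfect_matching E A -> exists p, pairing E A p.
Proof.
case/existsP => M /andP[/and3P[/eqP covM trivM _] /forallP M2].
pose p x := odflt x [pick y in pblock M x | y != x].
have pblockA x : x \in A -> pblock M x \in M by rewrite -covM => /pblock_mem.
have pblock_pair x : x \in A -> [/\ p x \in pblock M x, p x != x & E x (p x)].
  move=> xA; have xB : x \in pblock M x by rewrite mem_pblock covM.
  have /implyP/(_ (pblockA x xA))/existsP[a /existsP[b /and3P[ab Eab /eqP Bab]]] :=
    M2 (pblock M x).
  rewrite /p; case: pickP => [y /andP[yB yx]|none] /=.
    split=> //; move: xB yB yx Eab; rewrite Bab !inE => /orP[]/eqP-> /orP[]/eqP->;
      by rewrite ?eqxx // Esym.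
  have := none a; have := none b; rewrite Bab !inE !eqxx ?orbT /= => /negbFE/eqP bx /negbFE/eqP ax.
  by move: ab; rewrite ax bx eqxx.
exists p => x xA; have [pxB pxx Ex] := pblock_pair x xA.
have pxA : p x \in A.
  by rewrite -covM; apply/bigcupP; exists (pblock M x); first exact: pblockA.
have [ppxB ppxx _] := pblock_pair _ pxA.
rewrite (same_pblock trivM pxB) in ppxB.
have /implyP/(_ (pblockA x xA))/existsP[a /existsP[b /and3P[ab _ /eqP Bab]]] := M2 (pblock M x).
have xB : x \in pblock M x by rewrite mem_pblock covM.
split=> //; move: xB pxB ppxB pxx ppxx; rewrite Bab !inE.
by do 3 case/orP=> /eqP->; rewrite ?eqxx.
Qed.

Lemma perfect_matchingU A B : [disjoint A & B] ->
  has_perfect_matching E A -> has_perfect_matching E B ->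
  has_perfect_matching E (A :|: B).
Proof.
move=> AB /perfect_matching_pairing[p pA] /perfect_matching_pairing[q pB].
apply: (pairing_perfect_matching (p := (fun x => if x \in A then p x else q x))) => x.
rewrite inE; case: (boolP (x \in A)) => [xA _ | xA /= xB].
  by have [pxA ? ? ppx] := pA x xA; rewrite pxA ppx inE pxA.
have [qxB ? ? qqx] := pB x xB.
by rewrite (disjointFl AB qxB) qqx inE qxB orbT.
Qed.

Lemma perfect_matching_biclique A B : [disjoint A & B] -> #|A| = #|B| ->
  {in A & B, forall x y, E x y} -> has_perfect_matching E (A :|: B).
Proof.
move: {2}#|A| (erefl #|A|) => n; elim: n A B => [|n IHn] A B nA AB eAB EAB.
  have [-> ->] : A = set0 /\ B = set0 by split; apply: cards0_eq; rewrite // -eAB.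
  by rewrite setU0; apply: perfect_matching0.
have /card_gt0P[x xA] : 0 < #|A| by rewrite nA.
have /card_gt0P[y yB] : 0 < #|B| by rewrite -eAB nA.
have xy : x != y by apply: contraTneq yB => <-; rewrite (disjointFr AB xA).
have -> : A :|: B = [set x; y] :|: ((A :\ x) :|: (B :\ y)).
  apply/setP => z; rewrite !inE; case: (eqVneq z x) => [->|]; first by rewrite xA.
  by case: (eqVneq z y) => [->|]; rewrite ?yB ?orbT.
apply: perfect_matchingU.
- rewrite disjoints_subset; apply/subsetP => z; rewrite !inE => /orP[]/eqP->;
  by rewrite ?eqxx ?(disjointFr AB xA) ?(disjointFl AB yB) ?andbF.
- apply: (pairing_perfect_matching (p := (fun z => if z == x then y else x))) => z.
  have yx : (y == x) = false by rewrite eq_sym (negbTE xy).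
  rewrite !inE => /orP[]/eqP-> /=; rewrite ?eqxx ?yx /= ?eqxx ?(negbTE xy) ?orbT.
    by split=> //; apply: EAB.
  by split=> //; rewrite Esym; apply: EAB.
apply: IHn.
- by rewrite (cardsD1 x A) xA in nA; case: nA.
- exact: disjointW (subsetDl _ _) (subsetDl _ _) AB.
- by rewrite (cardsD1 x A) xA (cardsD1 y B) yB in eAB; case: eAB.
- by move=> u w; rewrite !inE => /andP[_ uA] /andP[_ wB]; apply: EAB.
Qed.

End Symmetric.

End PerfectMatching.

Section Tree.
Variable V : finType.
Implicit Types (t l r : dtree V) (o : op) (S : {set V}).

Lemma hE_sym t : symmetric (hE t).
Proof.
elim: t => [//|o l IHl r IHr] u w /=.
by case: o; rewrite /= IHl IHr // !(andbC (w \in _)) [(_ && _) || _]orbC.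
Qed.

Lemma hTS_subset t : hTS t \subset hV t.
Proof.
elim: t => [//|[] l IHl r IHr] /=; try exact: setUSS.
exact: subset_trans IHl (subsetUl _ _).
Qed.

Lemma hE_hV t u w : hE t u w -> u \in hV t.
Proof.
elim: t => [//|o l IHl r IHr] /=.
have [sl sr] := (subsetP (hTS_subset l), subsetP (hTS_subset r)).
by case: o => /=; rewrite !inE;
  [case/or4P=> [/IHl->|/IHr->|/andP[/sl->]|/andP[/sr->]] | case/orP=> [/IHl->|/IHr->]
  | case/or4P=> [/IHl->|/IHr->|/andP[/sl->]|/andP[/sr->]]]; rewrite ?orbT.
Qed.

Lemma hTS_gt0 t : 0 < #|hTS t|.
Proof.
elim: t => [x|[] l IHl r IHr] /=; rewrite ?cards1 //;
  exact: leq_trans IHl (subset_leq_card (subsetUl _ _)).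
Qed.

Lemma wf_tree_node (v T : dtree V) : is_node v T -> wf_tree T -> wf_tree v.
Proof.
elim: T => [x|o l IHl r IHr] /=; first by case=> // ->.
by case=> [-> //|[/IHl|/IHr] IH /and3P[wl wr _]]; apply: IH.
Qed.

Lemma hE_node_l o l r : subrel (hE l) (hE (Node o l r)).
Proof. by case: o => u w /= ->. Qed.

Lemma hE_node_r o l r : subrel (hE r) (hE (Node o l r)).
Proof. by case: o => u w /= ->; rewrite orbT. Qed.

Lemma closed_nbhd_node_l o l r S S' :
  closed_nbhd l S \subset closed_nbhd (Node o l r) (S :|: S').
Proof.
apply/subsetP => z; rewrite !inE => /andP[zl /orP[zS|/existsP[y /andP[yS Ezy]]]].
  by rewrite zl zS.
by rewrite zl; apply/orP; right; apply/existsP; exists y; rewrite inE yS hE_node_l.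
Qed.

Lemma closed_nbhd_node_r o l r S S' :
  closed_nbhd r S' \subset closed_nbhd (Node o l r) (S :|: S').
Proof.
apply/subsetP => z; rewrite !inE => /andP[zr /orP[zS|/existsP[y /andP[yS Ezy]]]].
  by rewrite zr zS !orbT.
by rewrite zr orbT; apply/orP; right; apply/existsP; exists y; rewrite inE yS orbT hE_node_r.
Qed.

Section Disjoint.
Variables l r : dtree V.
Hypothesis lr : [disjoint hV l & hV r].

Lemma hTSlF z : z \in hV r -> (z \in hTS l) = false.
Proof. by move=> zr; apply: contraTF zr => /(subsetP (hTS_subset l)) /(disjointFr lr)->. Qed.

Lemma hTSrF z : z \in hV l -> (z \in hTS r) = false.
Proof. by move=> zl; apply: contraTF zl => /(subsetP (hTS_subset r)) /(disjointFl lr)->. Qed.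

Lemma hE_node_ll o x y : x \in hV l -> y \in hV l -> hE (Node o l r) x y = hE l x y.
Proof.
move=> xl yl; have Er : hE r x y = false by apply: contraTF xl => /hE_hV /(disjointFl lr)->.
by case: o; rewrite /= Er ?(hTSrF xl) ?(hTSrF yl) ?andbF ?orbF.
Qed.

Lemma hE_node_rr o x y : x \in hV r -> y \in hV r -> hE (Node o l r) x y = hE r x y.
Proof.
move=> xr yr; have El : hE l x y = false by apply: contraTF xr => /hE_hV /(disjointFr lr)->.
by case: o; rewrite /= El ?(hTSlF xr) ?(hTSlF yr) /= ?andbF ?orbF.
Qed.

Lemma hE_attach_lr x y : x \in hV l -> y \in hV r ->
  hE (Node OAttach l r) x y = (x \in hTS l) && (y \in hTS r).
Proof.
move=> xl yr; rewrite /= (hTSrF xl) (hTSlF yr) andbF orbF.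
have El : hE l x y = false by apply: contraTF yr; rewrite hE_sym => /hE_hV /(disjointFr lr)->.
have Er : hE r x y = false by apply: contraTF xl => /hE_hV /(disjointFl lr)->.
by rewrite El Er.
Qed.

End Disjoint.

End Tree.

Section Witness.
Variable V : finType.
Implicit Types (t l r : dtree V) (o : op) (S X : {set V}).

Definition witness t k S X :=
  [/\ S \subset hV t, hV t :\: hTS t \subset closed_nbhd t S, X \subset S :&: hTS t,
      #|X| = k & has_perfect_matching (hE t) (S :\: X)].

Lemma kfeasibleP t k S : reflect (exists X, witness t k S X) (kfeasible t k S).
Proof.
apply: (iffP and3P) => [[SV dom /existsP[X /and3P[XS /eqP cX pm]]]|[X [SV dom XS cX pm]]].
  by exists X.
by split=> //; apply/existsP; exists X; rewrite XS cX eqxx.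
Qed.

Lemma witness_odd t k S X : witness t k S X -> odd #|S| = odd k.
Proof.
case=> _ _ /subsetP XS <- /perfect_matching_even.
have XS' : X \subset S by apply/subsetP => x /XS; rewrite inE => /andP[].
by rewrite -(cardsID X S) (setIidPr XS') oddD => /negbTE->; rewrite addbF.
Qed.

Lemma witness_card t k S X : witness t k S X -> k <= #|hTS t|.
Proof. by case=> _ _ XS <- _; apply/subset_leq_card/(subset_trans XS)/subsetIr. Qed.

Lemma perfect_matching_node o l r (A B : {set V}) : [disjoint A & B] ->
  has_perfect_matching (hE l) A -> has_perfect_matching (hE r) B ->
  has_perfect_matching (hE (Node o l r)) (A :|: B).
Proof.
move=> AB pmA pmB; apply: (perfect_matchingU (@hE_sym _ _)) => //.
  by apply: perfect_matching_mono pmA => x y _ _; apply: hE_node_l.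
by apply: perfect_matching_mono pmB => x y _ _; apply: hE_node_r.
Qed.

Lemma witness_twin o l r k1 k2 Sl Xl Sr Xr : o <> OAttach -> [disjoint hV l & hV r] ->
  witness l k1 Sl Xl -> witness r k2 Sr Xr ->
  witness (Node o l r) (k1 + k2) (Sl :|: Sr) (Xl :|: Xr).
Proof.
move=> oA lr [SlV doml XlS cXl pml] [SrV domr XrS cXr pmr].
have hTSv : hTS (Node o l r) = hTS l :|: hTS r by case: o oA.
have SlSr : [disjoint Sl & Sr] := disjointW SlV SrV lr.
have XlSl : Xl \subset Sl := subset_trans XlS (subsetIl _ _).
have XrSr : Xr \subset Sr := subset_trans XrS (subsetIl _ _).
split.
- exact: setUSS.
- rewrite hTSv; apply/subsetP => z /setDP[/setUP[zl|zr]]; rewrite inE negb_or => /andP[zTl zTr].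
    by apply/(subsetP (closed_nbhd_node_l o l r Sl Sr))/(subsetP doml); rewrite inE zTl.
  by apply/(subsetP (closed_nbhd_node_r o l r Sl Sr))/(subsetP domr); rewrite inE zTr.
- rewrite hTSv; apply: subset_trans (setUSS XlS XrS) _; apply/subsetP => x; rewrite !inE.
  by case/orP=> /andP[-> ->]; rewrite ?orbT.
- by rewrite cardsU (disjoint_setI0 (disjointW XlSl XrSr SlSr)) cards0 subn0 cXl cXr.
have SrXl : [disjoint Sr & Xl] by rewrite disjoint_sym; apply: disjointWl XlSl SlSr.
rewrite setDUl !setDUr (setDidPl (disjointWr XrSr SlSr)) (setDidPl SrXl).
rewrite (setIidPl (subsetDl _ _)) (setIidPr (subsetDl _ _)).
exact: perfect_matching_node (disjointW (subsetDl _ _) (subsetDl _ _) SlSr) pml pmr.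
Qed.

Lemma closed_nbhd_attach l r Sl Sr x : [disjoint hV l & hV r] -> x \in Sl :&: hTS l ->
  hV l :\: hTS l \subset closed_nbhd l Sl -> hV r :\: hTS r \subset closed_nbhd r Sr ->
  hV (Node OAttach l r) :\: hTS l \subset closed_nbhd (Node OAttach l r) (Sl :|: Sr).
Proof.
move=> lr /setIP[xSl xTl] doml domr; apply/subsetP => z /setDP[/setUP[zl|zr] zTl].
  by apply/(subsetP (closed_nbhd_node_l _ l r Sl Sr))/(subsetP doml); rewrite inE zl zTl.
case: (boolP (z \in hTS r)) => zTr; last first.
  by apply/(subsetP (closed_nbhd_node_r _ l r Sl Sr))/(subsetP domr); rewrite inE zr zTr.
have zv : z \in hV (Node OAttach l r) by rewrite in_setU zr orbT.
rewrite inE zv; apply/orP; right; apply/existsP; exists x.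
by rewrite in_setU xSl hE_sym hE_attach_lr ?xTl ?(subsetP (hTS_subset l)).
Qed.

Lemma witness_attach l r k j Sl Xl Sr Xr : [disjoint hV l & hV r] -> 0 < k + j ->
  witness l (k + j) Sl Xl -> witness r j Sr Xr ->
  exists X, witness (Node OAttach l r) k (Sl :|: Sr) X.
Proof.
move=> lr kj_gt0 [SlV doml XlS cXl pml] [SrV domr XrS cXr pmr].
have SlSr : [disjoint Sl & Sr] := disjointW SlV SrV lr.
have XlSl : Xl \subset Sl := subset_trans XlS (subsetIl _ _).
have XrSr : Xr \subset Sr := subset_trans XrS (subsetIl _ _).
have /card_geqP[s [s_uniq s_size sXl]] : j <= #|Xl| by rewrite cXl leq_addl.
pose Y := [set x in s].
have YXl : Y \subset Xl by apply/subsetP => x; rewrite inE; apply: sXl.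
have YSl := subset_trans YXl XlSl.
have cY : #|Y| = j by rewrite cardsE (card_uniqP s_uniq) s_size.
exists (Xl :\: Y); split.
- exact: setUSS.
- have /card_gt0P[x xXl] : 0 < #|Xl| by rewrite cXl.
  exact: closed_nbhd_attach lr (subsetP XlS x xXl) doml domr.
- exact: subset_trans (subsetDl _ _) (subset_trans XlS (setSI _ (subsetUl _ _))).
- by rewrite cardsDS // cXl cY addnK.
(* [Y] leaves the excluded twins of [vl] and is matched with [Xr] across the attachment *)
have -> : (Sl :|: Sr) :\: (Xl :\: Y) = (Sl :\: Xl :|: Sr :\: Xr) :|: (Y :|: Xr).
  have SrXlY : [disjoint Sr & Xl :\: Y].
    by rewrite disjoint_sym; apply: disjointWl (subset_trans (subsetDl _ _) XlSl) SlSr.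
  rewrite setDUl setDDr (setIidPr YSl) (setDidPl SrXlY).
  by rewrite -{1}(setID Sr Xr) (setIidPr XrSr) [Xr :|: _]setUC setUACA.
have setD_disjoint (A B : {set V}) : [disjoint A :\: B & B].
  by rewrite disjoints_subset setDE subsetIr.
apply: (perfect_matchingU (@hE_sym _ _)).
- rewrite disjoints_subset setCU subUset !subsetI -!disjoints_subset.
  rewrite (disjointWr YXl (setD_disjoint _ _)) (disjointW (subsetDl _ _) XrSr SlSr).
  by rewrite setD_disjoint disjoint_sym (disjointW YSl (subsetDl _ _) SlSr).
- exact: perfect_matching_node (disjointW (subsetDl _ _) (subsetDl _ _) SlSr) pml pmr.
apply: (perfect_matching_biclique (@hE_sym _ _)); first exact: disjointW YSl XrSr SlSr.
  by rewrite cY cXr.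
move=> x y xY yXr; have /setIP[xSl xTS] := subsetP XlS x (subsetP YXl x xY).
have /setIP[ySr yTS] := subsetP XrS y yXr.
by rewrite hE_attach_lr ?xTS ?(subsetP SlV) ?(subsetP SrV).
Qed.

End Witness.

Section AttachSplit.
Variables (V : finType) (l r : dtree V) (k : nat) (S X : {set V}) (p : V -> V).
Let v := Node OAttach l r.
Hypotheses (lr : [disjoint hV l & hV r]) (SV : S \subset hV v)
  (dom : hV v :\: hTS v \subset closed_nbhd v S) (XS : X \subset S :&: hTS l)
  (cX : #|X| = k) (pS : pairing (hE v) (S :\: X) p).

(* the matching edges leaving [vl] join twins of [vl] to twins of [vr]; their endpoints
   become excluded twins of the two sides *)
Let cross := [set x in (S :&: hV l) :\: X | p x \in hV r].

Let S_side z : z \in S -> (z \in hV l) || (z \in hV r).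
Proof. by move/(subsetP SV); rewrite inE. Qed.

Let X_hVl : X \subset hV l.
Proof. exact: subset_trans XS (subset_trans (subsetIr _ _) (hTS_subset l)). Qed.

Let cross_SX x : x \in cross -> x \in S :\: X.
Proof. by rewrite !inE => /andP[/and3P[-> -> _] _]. Qed.

Let cross_hTS x : x \in cross -> (x \in hTS l) && (p x \in hTS r).
Proof.
move=> xC; have [_ _ Ex _] := pS (cross_SX xC).
by move: xC Ex; rewrite !inE => /andP[/and3P[_ _ xl] pxr]; rewrite hE_attach_lr.
Qed.

Lemma witness_attach_left : witness l (k + #|cross|) (S :&: hV l) (X :|: cross).
Proof.
split.
- exact: subsetIr.
- apply/subsetP => z /setDP[zl zTS].
  have /(subsetP dom) : z \in hV v :\: hTS v by rewrite inE zTS in_setU zl.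
  rewrite !inE zl => /andP[_ /orP[zS|/existsP[y /andP[yS Ezy]]]]; first by rewrite zS.
  have /orP[yl|yr] := S_side yS; last by move: Ezy; rewrite hE_attach_lr // (negbTE zTS).
  by apply/orP; right; apply/existsP; exists y; rewrite !inE yS yl -(hE_node_ll lr OAttach).
- apply/subsetP => x; rewrite inE => /orP[xX|xC].
    by have /setIP[xS xT] := subsetP XS x xX; rewrite !inE xS xT (subsetP X_hVl).
  have /andP[xT _] := cross_hTS xC.
  by move: xC; rewrite !inE xT => /andP[/and3P[_ -> ->] _].
- have XC : [disjoint X & cross].
    rewrite disjoint_sym disjoints_subset; apply/subsetP => x.
    by move/cross_SX/setDP=> [_ xX]; rewrite inE.
  by rewrite cardsU cX (disjoint_setI0 XC) cards0 subn0.
apply: (pairing_restrict pS).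
- by apply/subsetP => x; rewrite !inE => /andP[/norP[-> _] /andP[-> _]].
- move=> x; rewrite !inE => /andP[/norP[xX xC] /andP[xS xl]].
  have xSX : x \in S :\: X by rewrite inE xX xS.
  have [/setDP[pxS pxX] _ _ ppx] := pS xSX.
  have pxl : p x \in hV l.
    by have /orP[//|pxr] := S_side pxS; move: xC; rewrite xX xS xl pxr.
  by rewrite pxS pxl (negbTE pxX) ppx (disjointFr lr xl) !andbF.
- by move=> x y; rewrite !inE => /andP[_ /andP[_ xl]] /andP[_ /andP[_ yl]]; rewrite hE_node_ll.
Qed.

Lemma witness_attach_right : witness r #|cross| (S :&: hV r) (p @: cross).
Proof.
split.
- exact: subsetIr.
- apply/subsetP => z /setDP[zr zTS].
  have /(subsetP dom) : z \in hV v :\: hTS v by rewrite inE (hTSlF lr zr) in_setU zr orbT.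
  rewrite !inE zr => /andP[_ /orP[zS|/existsP[y /andP[yS Ezy]]]]; first by rewrite zS.
  have /orP[yl|yr] := S_side yS.
    by move: Ezy; rewrite hE_sym hE_attach_lr // (negbTE zTS) andbF.
  by apply/orP; right; apply/existsP; exists y; rewrite !inE yS yr -(hE_node_rr lr OAttach).
- apply/subsetP => _ /imsetP[x xC ->].
  have [/setDP[pxS _] _ _ _] := pS (cross_SX xC); have /andP[_ pxT] := cross_hTS xC.
  by move: xC; rewrite !inE => /andP[_ pxr]; rewrite pxS pxr pxT.
- apply: card_in_imset => x y /cross_SX xSX /cross_SX ySX e.
  by have [_ _ _ <-] := pS xSX; have [_ _ _ <-] := pS ySX; rewrite e.
have X_hVr y : y \in hV r -> y \notin X.
  by move=> yr; apply: contraTN yr => /(subsetP X_hVl) yl; rewrite (disjointFr lr yl).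
apply: (pairing_restrict pS).
- by apply/subsetP => y; rewrite !inE => /andP[_ /andP[yS yr]]; rewrite yS X_hVr.
- move=> y; rewrite !inE => /andP[yC /andP[yS yr]].
  have ySX : y \in S :\: X by rewrite inE yS X_hVr.
  have [/setDP[pyS pyX] _ _ ppy] := pS ySX.
  have pyr : p y \in hV r.
    have /orP[pyl|//] := S_side pyS.
    by move: yC; rewrite -{1}ppy imset_f // !inE pyX pyS pyl ppy yr.
  rewrite pyS pyr !andbT; apply/negP => /imsetP[x xC e].
  have xl : x \in hV l by move: xC; rewrite !inE => /andP[/and3P[_ _ ->]].
  have [_ _ _ ppx] := pS (cross_SX xC).
  by move: yr; rewrite -ppy e ppx (disjointFr lr xl).
- by move=> x y; rewrite !inE => /andP[_ /andP[_ xr]] /andP[_ /andP[_ yr]]; rewrite hE_node_rr.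
Qed.

End AttachSplit.

Lemma witness_attach_split (V : finType) (l r : dtree V) k S X :
  [disjoint hV l & hV r] -> witness (Node OAttach l r) k S X ->
  exists j Sl Xl Sr Xr,
    [/\ witness l (k + j) Sl Xl, witness r j Sr Xr & #|S| = #|Sl| + #|Sr|].
Proof.
move=> lr [SV dom XS cX /(perfect_matching_pairing (@hE_sym _ _))[p pS]].
do 5 eexists; split.
- exact: (witness_attach_left lr SV dom XS cX pS).
- exact: (witness_attach_right lr SV dom XS pS).
have SlSr : (S :&: hV l) :&: (S :&: hV r) = set0.
  exact/disjoint_setI0/(disjointW (subsetIr _ _) (subsetIr _ _) lr).
by rewrite -cardsUI SlSr cards0 addn0 -setIUr (setIidPl SV).
Qed.

Lemma witness_exists (V : finType) (t : dtree V) k :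
  wf_tree t -> k <= #|hTS t| -> exists S X, witness t k S X.
Proof.
elim: t k => [x|o l IHl r IHr] k /=.
  rewrite cards1 => _ k1; exists (if k is 0 then set0 else [set x]).
  exists (if k is 0 then set0 else [set x]).
  by case: k k1 => [|[|//]] _; split; rewrite ?setDv ?sub0set ?setIid ?cards0 ?cards1 //;
    apply: perfect_matching0.
case/and3P => wl wr lr.
have twin o' : o' <> OAttach -> k <= #|hTS (Node o' l r)| ->
    exists S X, witness (Node o' l r) k S X.
  move=> oA; have -> : hTS (Node o' l r) = hTS l :|: hTS r by case: o' oA.
  rewrite cardsU (disjoint_setI0 (disjointW (hTS_subset l) (hTS_subset r) lr)) cards0 subn0.
  move=> kn; pose k1 := minn k #|hTS l|.
  have [Sl [Xl wSl]] := IHl k1 wl (geq_minr _ _).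
  have k2n : k - k1 <= #|hTS r|.
    by rewrite leq_subLR /k1; case: (leqP k #|hTS l|); rewrite ?leq_addr.
  have [Sr [Xr wSr]] := IHr (k - k1) wr k2n.
  by exists (Sl :|: Sr), (Xl :|: Xr); rewrite -(subnKC (geq_minl k #|hTS l|)); apply: witness_twin.
case: o => kn; [exact: twin | exact: twin |].
have [j [kj_gt0 kjl jr]] : exists j, [/\ 0 < k + j, k + j <= #|hTS l| & j <= #|hTS r|].
  case: (ltnP k #|hTS l|) => kl; first by exists 1; rewrite addn1 hTS_gt0.
  by exists 0; rewrite addn0 (leq_trans (hTS_gt0 l) kl).
have [Sl [Xl wSl]] := IHl _ wl kjl; have [Sr [Xr wSr]] := IHr _ wr jr.
by have [X wS] := witness_attach lr kj_gt0 wSl wSr; exists (Sl :|: Sr), X.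
Qed.

Section Optimal.
Variable V : finType.
Implicit Types t : dtree V.

(* [hgamma] folds [minn], which is [Order.min] on [nat]: the order-theoretic [bigmin]
   lemmas apply once the carrier [nat] is given explicitly. *)
Lemma hgamma_le t k S : kfeasible t k S -> hgamma t k <= #|S|.
Proof. exact: (@bigmin_le_cond _ nat). Qed.

Lemma hgamma_witness t k : wf_tree t -> k <= #|hTS t| ->
  exists S X, witness t k S X /\ hgamma t k = #|S|.
Proof.
move=> wt kn; have [S0 [X0 wS0]] := witness_exists wt kn.
have K0 : kfeasible t k S0 by apply/kfeasibleP; exists X0.
rewrite /hgamma (@bigmin_eq_arg _ nat _ _ _ _ _ K0) => [|S _].
  by case: arg_minP => // S /kfeasibleP[X wS] _; exists S, X.
by rewrite leEnat leqW ?max_card.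
Qed.

Lemma hgamma_odd t k : wf_tree t -> k <= #|hTS t| -> odd (hgamma t k) = odd k.
Proof. by move=> wt /(hgamma_witness wt)[S [X [wS ->]]]; apply: witness_odd wS. Qed.

Lemma hmin_le t k : k <= #|hTS t| -> hmin t <= hgamma t k.
Proof.
move=> kn; pose i : 'I_#|hTS t|.+1 := Ordinal (kn : k < _.+1).
exact: (@bigmin_le_cond _ nat _ _ i xpredT (fun i : 'I_ _ => hgamma t i)).
Qed.

Lemma hmin_attained t : exists2 k, k <= #|hTS t| & hgamma t k = hmin t.
Proof.
rewrite /hmin (@bigmin_eq_arg _ nat _ _ ord0 xpredT (fun i : 'I_ _ => hgamma t i)) //.
  by set a := Order.arg_min _ _ _; exists a; rewrite -1?ltnS ?ltn_ord.
move=> k _; exact: (@bigmin_le_id _ nat).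
Qed.

Lemma halphaP t : [/\ halpha t <= #|hTS t|, hgamma t (halpha t) = hmin t &
  forall k, k <= #|hTS t| -> hgamma t k = hmin t -> halpha t <= k].
Proof.
have [k0 k0n hk0] := hmin_attained t.
rewrite /halpha (@bigmin_eq_arg _ nat _ _ (Ordinal (k0n : k0 < _.+1))
  (fun k : 'I_ _ => hgamma t k == hmin t) (fun k => val k)) /=; first last.
- by move=> k _; rewrite leEnat -ltnS ltn_ord.
- by rewrite hk0.
case: arg_minP => [|k /eqP hk kmin]; first by rewrite /= hk0.
split=> [|//|j jn hj]; first by rewrite -ltnS.
by apply: (kmin (Ordinal (jn : j < _.+1))); rewrite /= hj.
Qed.

Lemma hbetaP t : [/\ hbeta t <= #|hTS t|, hgamma t (hbeta t) = hmin t &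
  forall k, k <= #|hTS t| -> hgamma t k = hmin t -> k <= hbeta t].
Proof.
have [k0 k0n hk0] := hmin_attained t.
rewrite /hbeta (@bigmax_eq_arg _ nat _ _ (Ordinal (k0n : k0 < _.+1))
  (fun k : 'I_ _ => hgamma t k == hmin t) (fun k => val k)) /=; first last.
- by move=> k _; rewrite leEnat.
- by rewrite hk0.
case: arg_maxP => [|k /eqP hk kmax]; first by rewrite /= hk0.
split=> [|//|j jn hj]; first by rewrite -ltnS.
by apply: (kmax (Ordinal (jn : j < _.+1))); rewrite /= hj.
Qed.

Definition parity_interval (a b x : nat) := [/\ a <= x, x <= b & odd x = odd a].

Lemma hgamma_eq_hmin t : wf_tree t -> propP t -> forall x, x <= #|hTS t| ->
  hgamma t x = hmin t <-> parity_interval (halpha t) (hbeta t) x.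
Proof.
move=> wt Pt x xn; have [an ha amin] := halphaP t; have [bn hb bmax] := hbetaP t.
split=> [hx | [ax xb px]].
  by split; [exact: amin | exact: bmax | rewrite -(hgamma_odd wt xn) hx -ha hgamma_odd].
case: (ltngtP x (halpha t)) => [|xa|->]; [by rewrite ltnNge ax | | exact: ha].
case: (ltngtP x (hbeta t)) => [xb'|bx|->]; [| by move: xb; rewrite leqNgt bx | exact: hb].
have [_ _ + _] := Pt x xn; apply; first by rewrite xa xb'.
by rewrite oddB ?(ltnW xa) // px addbb.
Qed.

Lemma halpha_eq t c m : c <= #|hTS t| -> hgamma t c = m ->
  (forall k, k <= #|hTS t| -> m <= hgamma t k) ->
  (forall k, k < c -> hgamma t k != m) -> halpha t = c.
Proof.
move=> cn gc m_le c_min; have [k0 k0n gk0] := hmin_attained t.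
have hm : hmin t = m by apply/eqP; rewrite eqn_leq -{1}gc hmin_le //= -gk0 m_le.
have [an ga amin] := halphaP t.
apply/eqP; rewrite eqn_leq amin ?hm //= leqNgt; apply/negP => /c_min.
by rewrite ga hm eqxx.
Qed.

End Optimal.

Lemma parity_interval_refl a b : a <= b -> parity_interval a b a.
Proof. by split. Qed.

Definition attach_alpha (a1 a2 b2 : nat) :=
  if b2 < a1 then a1 - b2 else (if a1 <= a2 then a2 - a1 else a1 - a2) %% 2.

Lemma attach_alpha_odd a1 a2 b2 : a1 <= b2 -> attach_alpha a1 a2 b2 = odd a1 (+) odd a2.
Proof.
rewrite /attach_alpha ltnNge => -> /=.
by case: leqP => a12; rewrite modn2 oddB ?(ltnW a12) // addbC.
Qed.

Lemma attach_alpha_le a1 b1 a2 b2 x j : parity_interval a1 b1 x -> parity_interval a2 b2 j ->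
  j <= x -> attach_alpha a1 a2 b2 <= x - j.
Proof.
move=> [a1x _ px] [_ jb2 pj] jx; case: (ltnP b2 a1) => [b2a1|a1b2].
  by rewrite /attach_alpha b2a1 leq_sub.
rewrite attach_alpha_odd // -px -pj -oddB //.
by case: (x - j) => // n; apply: leq_trans (leq_b1 _) _.
Qed.

Lemma attach_alpha_attained a1 b1 a2 b2 :
  parity_interval a1 b1 b1 -> parity_interval a2 b2 b2 -> a2 <= b1 ->
  ~ (a1 = 0 /\ b2 = 0) -> ~ (a2 = 0 /\ b1 = 0) ->
  exists x j, [/\ parity_interval a1 b1 x, parity_interval a2 b2 j, j <= x, 0 < x &
                  x - j = attach_alpha a1 a2 b2].
Proof.
move=> [ab1 _ pb1] [ab2 _ pb2] a2b1 nz1 nz2.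
have [PIa1 PIa2] := (parity_interval_refl ab1, parity_interval_refl ab2).
case: (ltnP b2 a1) => [b2a1|a1b2].
  exists a1, b2; split; rewrite ?(ltnW b2a1) ?(leq_ltn_trans _ b2a1) //.
  by rewrite /attach_alpha b2a1.
rewrite attach_alpha_odd //.
have [p12|p12] := eqVneq (odd a1) (odd a2).
  rewrite p12 addbb; case: (ltnP a2 a1) => [a21|a12].
    exists a1, a1; rewrite subnn; split=> //; last exact: leq_ltn_trans (leq0n a2) a21.
    by split; rewrite ?(ltnW a21).
  case: (posnP a2) => [a2_0|a2_gt0].
    have a1_0 : a1 = 0 by apply/eqP; rewrite -leqn0 -a2_0.
    have even_gt1 b : ~~ odd b -> b != 0 -> 1 < b by case: b => [|[]].
    have b1_gt1 : 1 < b1 by rewrite even_gt1 ?pb1 ?a1_0 //; apply/eqP => b1_0; apply: nz2.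
    have b2_gt1 : 1 < b2 by rewrite even_gt1 ?pb2 ?a2_0 //; apply/eqP => b2_0; apply: nz1.
    by exists 2, 2; split=> //; split; rewrite ?a1_0 ?a2_0.
  by exists a2, a2; rewrite subnn; split.
have {}p12 : odd a1 = ~~ odd a2 by move: p12; case: (odd a1); case: (odd a2).
rewrite p12 addNb addbb /=; case: (ltngtP a1 a2) => [a12|a21|a12]; last first.
- by move: p12; rewrite a12; case: (odd a2).
- have a1_gt0 : 0 < a1 := leq_ltn_trans (leq0n a2) a21.
  exists a1, a1.-1; split; [exact: PIa1 | split | exact: leq_pred | exact: a1_gt0 |].
  + by rewrite -ltnS prednK.
  + exact: leq_trans (leq_pred a1) a1b2.
  + by move: p12; rewrite -{1}(prednK a1_gt0) /= => /negb_inj.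
  + by rewrite -{1}(prednK a1_gt0) subSnn.
exists a2.+1, a2; rewrite subSnn; split=> //.
split; [exact: leqW (ltnW a12) | | by rewrite /= p12].
rewrite ltn_neqAle a2b1 andbT; apply/eqP => a2_b1.
by move: pb1; rewrite -a2_b1 p12; case: (odd a2).
Qed.

Section AttachGamma.
Variables (V : finType) (l r : dtree V).
Let v := Node OAttach l r.
Hypothesis wv : wf_tree v.

Let wl : wf_tree l. Proof. by case/and3P: wv. Qed.
Let wr : wf_tree r. Proof. by case/and3P: wv. Qed.
Let lr : [disjoint hV l & hV r]. Proof. by case/and3P: wv. Qed.

Lemma hgamma_attach_ge k : k <= #|hTS l| ->
  exists j, [/\ k + j <= #|hTS l|, j <= #|hTS r| & hgamma l (k + j) + hgamma r j <= hgamma v k].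
Proof.
move=> kn; have [S [X [wS ->]]] := hgamma_witness wv kn.
have [j [Sl [Xl [Sr [Xr [wSl wSr ->]]]]]] := witness_attach_split lr wS.
exists j; split; [exact: witness_card wSl | exact: witness_card wSr |].
by apply: leq_add; apply: hgamma_le; apply/kfeasibleP; [exists Xl | exists Xr].
Qed.

Lemma hgamma_attach_le x j : x <= #|hTS l| -> j <= #|hTS r| -> j <= x -> 0 < x ->
  hgamma v (x - j) <= hgamma l x + hgamma r j.
Proof.
move=> xn jn jx x_gt0.
have [Sl [Xl [wSl ->]]] := hgamma_witness wl xn.
have [Sr [Xr [wSr ->]]] := hgamma_witness wr jn.
rewrite -(subnK jx) in x_gt0 wSl.
have [X wS] := witness_attach lr x_gt0 wSl wSr.
have K : kfeasible v (x - j) (Sl :|: Sr) by apply/kfeasibleP; exists X.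
exact: leq_trans (hgamma_le K) (leq_card_setU Sl Sr).
Qed.

Lemma hmin_le_attach k : k <= #|hTS l| -> hmin l + hmin r <= hgamma v k.
Proof.
move=> kn; have [j [kjn jn le_kj]] := hgamma_attach_ge kn.
exact: leq_trans (leq_add (hmin_le kjn) (hmin_le jn)) le_kj.
Qed.

Lemma hgamma_attach_hmin k : k <= #|hTS l| -> hgamma v k = hmin l + hmin r ->
  exists j, [/\ k + j <= #|hTS l|, j <= #|hTS r|, hgamma l (k + j) = hmin l &
                hgamma r j = hmin r].
Proof.
move=> kn gk; have [j [kjn jn le_kj]] := hgamma_attach_ge kn.
have [hl hr] := (hmin_le kjn, hmin_le jn); rewrite gk in le_kj.
exists j; split; [exact: kjn | exact: jn | apply/eqP.. ].
  rewrite eqn_leq hl andbT -(leq_add2r (hgamma r j)).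
  by apply: leq_trans le_kj _; rewrite leq_add2l.
rewrite eqn_leq hr andbT -(leq_add2l (hgamma l (k + j))).
by apply: leq_trans le_kj _; rewrite leq_add2r.
Qed.

End AttachGamma.

Theorem lemma31 (V : finType) (e : rel V) (T vl vr : dtree V) :
  simple_graph e -> distance_hereditary e -> decomp_tree e T ->
  is_node (Node OAttach vl vr) T ->
  propP vl -> propP vr ->
  halpha vr <= hbeta vl ->
  ~ (halpha vl = 0 /\ hbeta vr = 0) ->
  ~ (halpha vr = 0 /\ hbeta vl = 0) ->
  halpha (Node OAttach vl vr) =
    (if hbeta vr < halpha vl then halpha vl - hbeta vr
     else (if halpha vl <= halpha vr then halpha vr - halpha vl
           else halpha vl - halpha vr) %% 2).
Proof.
move=> _ _ [wT _ _] /wf_tree_node/(_ wT) wv Pl Pr a2b1 nz1 nz2.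
have /and3P[wl wr _] := wv.
have Zl := hgamma_eq_hmin wl Pl; have Zr := hgamma_eq_hmin wr Pr.
have [bl_n gbl _] := hbetaP vl; have [br_n gbr _] := hbetaP vr.
rewrite -/(attach_alpha _ _ _).
have [x [j [PIx PIj jx x_gt0 xj_eq]]] :=
  attach_alpha_attained ((Zl _ bl_n).1 gbl) ((Zr _ br_n).1 gbr) a2b1 nz1 nz2.
rewrite -xj_eq.
have xn : x <= #|hTS vl| by case: PIx => _ /leq_trans->.
have jn : j <= #|hTS vr| by case: PIj => _ /leq_trans->.
have xjn : x - j <= #|hTS vl| := leq_trans (leq_subr j x) xn.
apply: (halpha_eq (m := hmin vl + hmin vr)); [exact: xjn | | exact: hmin_le_attach wv |].
  apply/eqP; rewrite eqn_leq hmin_le_attach // andbT.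
  by rewrite -(Zl x xn).2 // -(Zr j jn).2 // hgamma_attach_le.
move=> k kc; apply/negP => /eqP gk.
have [j' [kjn jn' gl gr]] := hgamma_attach_hmin wv (leq_trans (ltnW kc) xjn) gk.
have := attach_alpha_le ((Zl _ kjn).1 gl) ((Zr _ jn').1 gr) (leq_addl k j').
by rewrite addnK -xj_eq leqNgt kc.
Qed.
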